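(* Let $n \ge 0$ and $p \ge 1$ be integers, let $T_2 = \begin{pmatrix} 1 & 0 \\ 1 & 1 \end{pmatrix}$ over $\mathbb{F}_2$, let $T_p$ be a $p \times p$ binary kernel matrix, and let $T_N = T_2^{\otimes n} \otimes T_p$, where $N = 2^n p$. Then the minimum-distance spectra satisfy $$S_{T_N} = \operatorname{sort}\big(S_{T_2^{\otimes n}} \otimes S_{T_p}\big) = \operatorname{sort}\big([2 \;\; 1]^{\otimes n} \otimes S_{T_p}\big),$$ that is, for every $k \in \{1,\dots,N\}$, $S_{T_N}(k)$ equals the $k$-th entry of the vector obtained by sorting the entries of the length-$N$ vector $[2\;\;1]^{\otimes n} \otimes S_{T_p}$ in non-increasing order (and likewise for $S_{T_2^{\otimes n}} \otimes S_{T_p}$).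
   Context: All matrices are over $\mathbb{F}_2$ and $\otimes$ denotes the Kronecker product (of matrices, and of row vectors regarded as $1\times m$ matrices); $A^{\otimes n}$ is the $n$-fold Kronecker power, with $A^{\otimes 0} = (1)$. A binary kernel is a $p\times p$ binary matrix that is polarizing, i.e. it is invertible over $\mathbb{F}_2$ and no column permutation of it is upper triangular. For a binary $m \times m$ matrix $T$ with rows indexed by $[m] = \{0,1,\dots,m-1\}$ and a subset $\mathcal{R} \subseteq [m]$, $T^{(\mathcal{R})}$ denotes the submatrix formed by the rows indexed by $\mathcal{R}$, and $d(A)$ denotes the minimum Hamming distance (minimum weight of a nonzero codeword) of the binary linear code spanned by the rows of $A$. The minimum-distance spectrum of $T$ is the vector $S_T = (S_T(1), \dots, S_T(m))$ with $S_T(k) = \max_{\mathcal{R}\subseteq[m],\, |\mathcal{R}| = k} d\big(T^{(\mathcal{R})}\big)$. For a real vector $v$, $\operatorname{sort}(v)$ is the vector with the same entries (with multiplicity) arranged in non-increasing order. *)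

From HB Require Import structures.
From mathcomp Require Import all_boot all_order all_algebra all_fingroup.
From mathcomp Require Export mxtens.
Set Implicit Arguments. Unset Strict Implicit. Unset Printing Implicit Defensive.
Import GRing.Theory.
Local Open Scope ring_scope.

(* Kronecker product of matrices: [tensmx] (notation A *t B) and Kronecker
   power [ntensmx] (notation A ^t n, with A ^t 0 = the 1x1 identity) come
   from mathcomp real_closed's mxtens.v; entry (i1*p+i2, j1*q+j2) of A *t B
   is A i1 j1 * B i2 j2. *)

Definition T2 : 'M['F_2]_2 := \matrix_(i < 2, j < 2) (if (i < j)%N then 0 else 1).

Definition upper_tri {p : nat} (A : 'M['F_2]_p) : Prop :=
  forall i j : 'I_p, (j < i)%N -> A i j = 0.

Definition binary_kernel {p : nat} (A : 'M['F_2]_p) : Prop :=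
  A \in unitmx /\ forall s : 'S_p, ~ upper_tri (col_perm s A).

Definition wt {n : nat} (c : 'rV['F_2]_n) : nat := #|[set j | c 0 j != 0]|.

(* Minimum distance of the code spanned by the rows of A (minimum weight of a
   nonzero codeword; n, the length, if the code is {0} -- never used here). *)
Definition mindist {r n : nat} (A : 'M['F_2]_(r, n)) : nat :=
  \big[minn/n]_(c : 'rV['F_2]_n | (c <= A)%MS && (c != 0)) wt c.

(* T^(R): the rows of T indexed by R (other rows replaced by zero, which
   does not change the spanned code). *)
Definition rows_of {m n : nat} (T : 'M['F_2]_(m, n)) (R : {set 'I_m}) : 'M['F_2]_(m, n) :=
  \matrix_(i, j) (if i \in R then T i j else 0).

Definition spec {m : nat} (T : 'M['F_2]_m) (k : nat) : nat :=
  \max_(R : {set 'I_m} | #|R| == k) mindist (rows_of T R).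

Definition spec_seq {m : nat} (T : 'M['F_2]_m) : seq nat :=
  [seq spec T k | k <- iota 1 m].

Definition kron_seq (s t : seq nat) : seq nat :=
  flatten [seq [seq (a * b)%N | b <- t] | a <- s].

Fixpoint kron_pow_seq (s : seq nat) (n : nat) : seq nat :=
  if n is n'.+1 then kron_seq s (kron_pow_seq s n') else [:: 1%N].

Definition sort_desc (s : seq nat) : seq nat := sort geq s.

(* Write A_i for the rows of A and R_i = {j | (i, j) \in R} for the sections of a
   set R of rows of A ⊗ B. Reshaping a message x into an m×p matrix X turns the
   codeword x (A ⊗ B) into A^T X B; taking X supported on a single row i gives
   d((A ⊗ B)^(R)) <= wt(A_i) d(B^(R_i)) for every nonempty section (B invertible).
   When A is [wt_dominant], i.e. every nonzero A^T Y has weight at least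
   wt(A_i) wt(Y_i) for some nonzero row Y_i, the converse holds for some i, so
   d((A ⊗ B)^(R)) = min_i wt(A_i) d(B^(R_i)). As S_B is nonincreasing, choosing the
   section sizes optimally gives S_{A⊗B}(k) >= mu iff at least k pairs (i, l) satisfy
   wt(A_i) S_B(l) >= mu, i.e. S_{A⊗B}(k) is the k-th largest entry of the Kronecker
   product of the row weights of A with S_B. The (u | u+v) structure of T_2 ⊗ A
   propagates dominance from A to T_2 ⊗ A, so T_2^{⊗n} is dominant; its row weights
   are a permutation of [2 1]^{⊗n}, and the case B = (1) identifies them, sorted,
   with the spectrum of T_2^{⊗n}. *)

From mathcomp Require Import all_boot all_order all_algebra all_fingroup.
From mathcomp Require Import mxtens zify.
Set Implicit Arguments. Unset Strict Implicit. Unset Printing Implicit Defensive.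
Import Order.TTheory GRing.Theory.
Local Open Scope ring_scope.

(** * Hamming weights *)

Definition mxwt {m n : nat} (M : 'M['F_2]_(m, n)) : nat :=
  (\sum_i \sum_j (M i j != 0%R : nat))%N.

Lemma wt_mxwt {n : nat} (c : 'rV['F_2]_n) : wt c = mxwt c.
Proof.
rewrite /wt /mxwt big_ord1 -sum1_card big_mkcond /=.
by apply: eq_bigr => j _; rewrite inE; case: (c 0 j != 0).
Qed.

Lemma wt_le_size {n : nat} (c : 'rV['F_2]_n) : (wt c <= n)%N.
Proof. by rewrite /wt (leq_trans (max_card _)) ?card_ord. Qed.

Lemma mxwt_eq0 {m n : nat} (M : 'M['F_2]_(m, n)) : (mxwt M == 0%N) = (M == 0).
Proof.
rewrite /mxwt sum_nat_eq0; apply/forallP/eqP => [M0|-> i /=]; last first.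
  by rewrite sum_nat_eq0; apply/forallP => j; rewrite mxE eqxx.
apply/matrixP => i j; move: (M0 i); rewrite /= sum_nat_eq0 => /forallP /(_ j).
by rewrite mxE; case: (M i j =P 0).
Qed.

Lemma wt_eq0 {n : nat} (c : 'rV['F_2]_n) : (wt c == 0%N) = (c == 0).
Proof. by rewrite wt_mxwt mxwt_eq0. Qed.

Lemma mxwtB {m n : nat} (U V : 'M['F_2]_(m, n)) : (mxwt (U - V) <= mxwt U + mxwt V)%N.
Proof.
rewrite /mxwt -big_split leq_sum // => i _; rewrite -big_split leq_sum // => j _.
rewrite !mxE; case: (V i j =P 0) => [->|_] /=; first by rewrite subr0 addn0.
by rewrite (leq_trans (leq_b1 _)) // addn1.
Qed.

(** * Minimum distance and minimum-distance spectrum *)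

Section MinimumDistance.
Variables (r n : nat) (A : 'M['F_2]_(r, n)).

Lemma mindist_le_wt c : (c <= A)%MS -> c != 0 -> (mindist A <= wt c)%N.
Proof.
by move=> cA c0; rewrite /mindist -minEnat; apply: (@bigmin_le_cond _ nat _ n c); rewrite /= cA.
Qed.

Lemma mindist_le_size : (mindist A <= n)%N.
Proof. by rewrite /mindist -minEnat; apply: (@bigmin_le_id _ nat). Qed.

Lemma mindist_cases :
  (exists c, [/\ (c <= A)%MS, c != 0 & wt c = mindist A]) \/ mindist A = n.
Proof.
pose P x := (exists c, [/\ (c <= A)%MS, c != 0 & wt c = x]) \/ x = n.
rewrite /mindist; apply: (big_ind P) => [|x y|c /andP[cA c0]]; [by right| |by left; exists c].
by rewrite /minn; case: ifP.
Qed.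

End MinimumDistance.

Section RowsOf.
Variables (m n : nat) (T : 'M['F_2]_(m, n)).

Lemma mul_rows_of (R : {set 'I_m}) (y : 'rV_m) :
  y *m rows_of T R = (\row_i (if i \in R then y 0 i else 0)) *m T.
Proof.
apply/rowP => j; rewrite !mxE; apply: eq_bigr => i _; rewrite !mxE.
by case: (i \in R); rewrite ?mulr0 ?mul0r.
Qed.

Lemma sub_rows_ofP (R : {set 'I_m}) (c : 'rV_n) :
  reflect (exists2 x : 'rV_m, (forall i, x 0 i != 0 -> i \in R) & c = x *m T)
          (c <= rows_of T R)%MS.
Proof.
apply: (iffP submxP) => [[y ->]|[x xR ->]].
  rewrite mul_rows_of; eexists => // i; rewrite mxE.
  by case: (i \in R); rewrite ?eqxx.
exists x; rewrite mul_rows_of; congr (_ *m _); apply/rowP => i; rewrite mxE.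
by case: ifPn => // iR; apply/eqP; exact: contraNT (xR i) iR.
Qed.

Lemma mindist_rows_of_subset (R1 R2 : {set 'I_m}) :
  R1 \subset R2 -> (mindist (rows_of T R2) <= mindist (rows_of T R1))%N.
Proof.
move=> /subsetP sR12.
have [[c [/sub_rows_ofP[x xR ->] c0 <-]]|->] := mindist_cases (rows_of T R1).
  by apply: mindist_le_wt c0; apply/sub_rows_ofP; exists x => // i /xR /sR12.
exact: mindist_le_size.
Qed.

Lemma rows_of_set0 : rows_of T set0 = 0.
Proof. by apply/matrixP => i j; rewrite !mxE inE. Qed.

End RowsOf.

Section Spectrum.
Variables (m : nat) (T : 'M['F_2]_m).

Lemma mindist_le_spec (R : {set 'I_m}) : (mindist (rows_of T R) <= spec T #|R|)%N.
Proof. by rewrite /spec (leq_bigmax_cond R). Qed.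

Lemma spec_leP k b :
  reflect (forall R : {set 'I_m}, #|R| = k -> mindist (rows_of T R) <= b)%N
          (spec T k <= b)%N.
Proof.
by apply: (iffP (bigmax_leqP _ _ _)) => leRb R; [move/eqP; apply: leRb | move/eqP/leRb].
Qed.

Lemma spec_attained k : (k <= m)%N ->
  exists2 R : {set 'I_m}, #|R| = k & mindist (rows_of T R) = spec T k.
Proof.
move=> km; pose R0 : {set 'I_m} := [set widen_ord km i | i : 'I_k].
have cardR0 : #|R0| = k.
  by rewrite card_imset ?card_ord // => i j /(congr1 val) /= /val_inj.
have [|R /eqP cardR specE] := @eq_bigmax_cond _ [pred R : {set 'I_m} | #|R| == k]
  (fun R => mindist (rows_of T R)).
  by apply/card_gt0P; exists R0; rewrite inE /= cardR0.
by exists R => //; symmetry; exact: specE.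
Qed.

Lemma spec_nonincreasing : {homo spec T : k l /~ (k <= l)%N}.
Proof.
move=> k l; apply: (@homo_leq _ _ (fun a b => b <= a)%N) => [//|a b c ba cb|{}k].
  exact: leq_trans cb ba.
apply/spec_leP => R cardR; have [x xR] : exists x, x \in R by apply/card_gt0P; rewrite cardR.
apply: leq_trans (mindist_rows_of_subset T (subD1set R x)) _.
by have := cardsD1 x R; rewrite xR cardR add1n => -[->]; apply: mindist_le_spec.
Qed.

End Spectrum.

Lemma spec_castmx m m' (e : m = m') (T : 'M['F_2]_m) k : spec (castmx (e, e) T) k = spec T k.
Proof. by case: m' / e; rewrite castmx_id. Qed.

Lemma spec_seq1 : spec_seq (1 : 'M['F_2]_1) = [:: 1%N].
Proof.
congr [:: _]; apply/eqP; rewrite eqn_leq; apply/andP; split.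
  by apply/spec_leP => R _; apply: mindist_le_size.
have := mindist_le_spec 1 [set: 'I_1]; rewrite cardsT card_ord; apply: leq_trans.
have [[c [_ c_neq0 <-]]|->] := mindist_cases (rows_of (1 : 'M['F_2]_1) [set: 'I_1]) => //.
by rewrite lt0n wt_eq0.
Qed.

(** * Kronecker products *)

Lemma big_mxtens (R : Type) (idx : R) (op : Monoid.com_law idx) m p
    (F : 'I_(m * p) -> R) :
  \big[op/idx]_(k < m * p) F k =
  \big[op/idx]_(i < m) \big[op/idx]_(j < p) F (mxtens_index (i, j)).
Proof.
rewrite pair_big (reindex (@mxtens_index m p)) /=; first by apply: eq_bigr => -[].
by exists (@mxtens_unindex m p) => k _; [apply: mxtens_indexK | apply: mxtens_unindexK].
Qed.

Lemma tens_rowE {R : pzRingType} m p (u : 'rV[R]_m) (v : 'rV[R]_p) i j :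
  (u *t v) 0 (mxtens_index (i, j)) = u 0 i * v 0 j.
Proof.
by rewrite mxE mxtens_indexK /=; move: (Ordinal _) (Ordinal _) => a b; rewrite [a]ord1 [b]ord1.
Qed.

Lemma row_tens {R : pzRingType} m n p q (A : 'M[R]_(m, n)) (B : 'M[R]_(p, q)) i j :
  row (mxtens_index (i, j)) (A *t B) = row i A *t row j B.
Proof.
by apply/rowP => k; case: (mxtens_indexP k) => s t; rewrite tens_rowE !mxE !mxtens_indexK.
Qed.

Lemma wt_tens m p (u : 'rV['F_2]_m) (v : 'rV['F_2]_p) : wt (u *t v) = (wt u * wt v)%N.
Proof.
rewrite !wt_mxwt /mxwt !big_ord1 big_mxtens big_distrl; apply: eq_bigr => i _.
rewrite big_distrr; apply: eq_bigr => j _.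
by rewrite tens_rowE mulf_eq0 negb_or; case: (_ != 0); case: (_ != 0).
Qed.

Definition mxtens_unvec {R : Type} {m p : nat} (x : 'rV[R]_(m * p)) : 'M[R]_(m, p) :=
  \matrix_(i, j) x 0 (mxtens_index (i, j)).

Lemma mxtens_unvec_mul {R : comPzRingType} m n p q (A : 'M[R]_(m, n)) (B : 'M[R]_(p, q))
    (x : 'rV[R]_(m * p)) :
  mxtens_unvec (x *m (A *t B)) = A^T *m (mxtens_unvec x *m B).
Proof.
apply/matrixP => s t; rewrite !mxE big_mxtens; apply: eq_bigr => i _.
rewrite !mxE big_distrr; apply: eq_bigr => j _.
by rewrite tensmxE !mxE mulrCA.
Qed.

Lemma wt_mxtens_unvec m p (x : 'rV['F_2]_(m * p)) : wt x = mxwt (mxtens_unvec x).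
Proof.
rewrite wt_mxwt /mxwt big_ord1 big_mxtens; apply: eq_bigr => i _.
by apply: eq_bigr => j _; rewrite mxE.
Qed.

Definition tens_section {m p : nat} (R : {set 'I_(m * p)}) (i : 'I_m) : {set 'I_p} :=
  [set j | mxtens_index (i, j) \in R].

Lemma card_tens_section m p (R : {set 'I_(m * p)}) :
  #|R| = (\sum_i #|tens_section R i|)%N.
Proof.
rewrite -sum1_card big_mkcond big_mxtens /=; apply: eq_bigr => i _.
by rewrite -sum1_card [RHS]big_mkcond; apply: eq_bigr => j _; rewrite inE.
Qed.

Definition wt_dominant {m n : nat} (A : 'M['F_2]_(m, n)) : Prop :=
  (forall i, 0 < wt (row i A))%N /\
  forall q (X : 'M['F_2]_(m, q)), X != 0 ->
    exists2 i, row i X != 0 & (wt (row i A) * wt (row i X) <= mxwt (A^T *m X))%N.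

Section TensorMinimumDistance.
Variables (m n p q : nat) (A : 'M['F_2]_(m, n)) (B : 'M['F_2]_(p, q)).
Variable R : {set 'I_(m * p)}.

Lemma mindist_tens_le_wt i c :
  row i A != 0 -> (c <= rows_of B (tens_section R i))%MS -> c != 0 ->
  (mindist (rows_of (A *t B) R) <= wt (row i A) * wt c)%N.
Proof.
move=> Ai0 /sub_rows_ofP[y ysec ->] c0.
rewrite -wt_tens rowE -tensmx_mul; apply: mindist_le_wt.
  apply/sub_rows_ofP; exists ((delta_mx 0 i : 'rV_m) *t y) => // k.
  case: (mxtens_indexP k) => i' j; rewrite tens_rowE mxE.
  rewrite eqxx; case: (i' =P i) => [->|_]; last by rewrite mul0r eqxx.
  by rewrite mul1r => /ysec; rewrite inE.
by rewrite tensmx_mul -rowE -wt_eq0 wt_tens muln_eq0 !wt_eq0 negb_or Ai0.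
Qed.

Lemma mindist_tens_ge : wt_dominant A -> R != set0 ->
  exists2 i, tens_section R i != set0 &
    (wt (row i A) * mindist (rows_of B (tens_section R i))
       <= mindist (rows_of (A *t B) R))%N.
Proof.
move=> [_ domA] R0.
have [[c [/sub_rows_ofP[x xR ->] c0 <-]]|->] := mindist_cases (rows_of (A *t B) R); last first.
  case/set0Pn: R0 => k; case: (mxtens_indexP k) => i j kR.
  exists i; first by apply/set0Pn; exists j; rewrite inE.
  by rewrite leq_mul ?wt_le_size ?mindist_le_size.
set X := mxtens_unvec x.
have XB0 : X *m B != 0.
  apply: contra c0 => /eqP XB0.
  by rewrite -wt_eq0 wt_mxtens_unvec mxtens_unvec_mul XB0 mulmx0 mxwt_eq0.
have [i XBi0 le_wt] := domA _ _ XB0.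
have XBi_sec : (row i (X *m B) <= rows_of B (tens_section R i))%MS.
  rewrite row_mul; apply/sub_rows_ofP; exists (row i X) => // j.
  by rewrite !mxE => /xR; rewrite inE.
exists i.
  apply: contraNneq XBi0 => sec0; move: XBi_sec.
  by rewrite sec0 rows_of_set0 => /submx0null ->.
rewrite wt_mxtens_unvec mxtens_unvec_mul; apply: leq_trans le_wt.
by rewrite leq_mul2l mindist_le_wt ?orbT.
Qed.

End TensorMinimumDistance.

Lemma row_unitmx_neq0 {F : fieldType} p (B : 'M[F]_p) j : B \in unitmx -> row j B != 0.
Proof.
rewrite -row_free_unit; apply: contraTneq => Bj0.
by apply/row_freePn; exists j; rewrite Bj0 sub0mx.
Qed.

Lemma mindist_tens_le m n p (A : 'M['F_2]_(m, n)) (B : 'M['F_2]_p) R i :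
  B \in unitmx -> row i A != 0 -> tens_section R i != set0 ->
  (mindist (rows_of (A *t B) R)
     <= wt (row i A) * mindist (rows_of B (tens_section R i)))%N.
Proof.
move=> uB Ai0 /set0Pn[j jsec].
have [[c [cB c0 <-]]|->] := mindist_cases (rows_of B (tens_section R i)).
  exact: mindist_tens_le_wt.
have Bj_sec : (row j B <= rows_of B (tens_section R i))%MS.
  have <- : row j (rows_of B (tens_section R i)) = row j B.
    by apply/rowP => k; rewrite !mxE jsec.
  exact: row_sub.
apply: leq_trans (mindist_tens_le_wt Ai0 Bj_sec (row_unitmx_neq0 j uB)) _.
by rewrite leq_mul2l wt_le_size orbT.
Qed.

(** * Sorting and counting *)

Lemma sum_ltn p L : (\sum_(l < p) (l < L : nat))%N = minn L p.
Proof.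
elim: p => [|p IHp]; first by rewrite big_ord0 minn0.
by rewrite big_ord_recr /= IHp; case: ltnP => ?; lia.
Qed.

Lemma leq_sum_downclosed (P : pred nat) p L :
  (forall l, P l.+1 -> P l) -> (0 < L <= p)%N ->
  (L <= \sum_(l < p) P l)%N = P L.-1.
Proof.
move=> Pdown /andP[L0 Lp].
have Pmono k l : (k <= l)%N -> P l -> P k.
  by move/subnK <-; elim: (l - k)%N => [//|d IH]; rewrite addSn => /Pdown/IH.
apply/idP/idP => [|PL].
  apply: contraLR => nPL; rewrite -ltnNge.
  apply: (@leq_ltn_trans (\sum_(l < p) (l < L.-1 : nat))); last by rewrite sum_ltn; lia.
  apply: leq_sum => l _; case: ltnP => [_|le_L1l]; first exact: leq_b1.
  by rewrite leqn0 eqb0; apply: contra nPL; apply: Pmono.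
apply: leq_trans (_ : \sum_(l < p) (l < L : nat) <= _)%N; first by rewrite sum_ltn; lia.
by apply: leq_sum => l _; case: ltnP => // lL; rewrite (Pmono l L.-1) //; lia.
Qed.

Lemma count_kron_seq (Q : pred nat) s t :
  count Q (kron_seq s t) = (\sum_(a <- s) count (fun b => Q (a * b)%N) t)%N.
Proof.
rewrite /kron_seq count_flatten sumnE !big_map.
by apply: eq_bigr => a _; rewrite count_map.
Qed.

Lemma size_kron_seq s t : size (kron_seq s t) = (size s * size t)%N.
Proof.
rewrite -count_predT count_kron_seq (eq_bigr (fun _ => size t)) => [|a _]; last first.
  by rewrite -count_predT.
by rewrite big_const_seq count_predT iter_addn_0 mulnC.
Qed.

Lemma perm_kron_seq s1 s2 t : perm_eq s1 s2 -> perm_eq (kron_seq s1 t) (kron_seq s2 t).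
Proof. by move=> s12; apply/perm_flatten/perm_map. Qed.

Lemma kron_seq1 s : kron_seq s [:: 1%N] = s.
Proof. by rewrite /kron_seq; elim: s => //= a s ->; rewrite muln1. Qed.

Lemma sorted_geq_nth (t : seq nat) mu k : sorted geq t -> (k < size t)%N ->
  (mu <= nth 0 t k)%N = (k < count (leq mu) t)%N.
Proof.
elim: t k => [//|a t IHt] k /= sorted_at.
have le_ta := order_path_min (rev_trans leq_trans) sorted_at.
case: (leqP mu a) => [le_mu_a | lt_a_mu].
  by case: k => [//|k]; rewrite ltnS add1n ltnS; apply: IHt; apply: path_sorted sorted_at.
have ->: count (leq mu) t = 0%N.
  apply/eqP; rewrite -leqn0 leqNgt -has_count; apply/hasPn => b /(allP le_ta) le_ba.
  by rewrite -ltnNge (leq_ltn_trans le_ba).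
case: k => [_|k kt] /=; first by rewrite leqNgt lt_a_mu.
by rewrite leqNgt (leq_ltn_trans _ lt_a_mu) //; apply/(allP le_ta)/mem_nth.
Qed.

Lemma nth_sort_desc (s : seq nat) mu k : (k < size s)%N ->
  (mu <= nth 0 (sort_desc s) k)%N = (k < count (leq mu) s)%N.
Proof.
move=> ks; rewrite sorted_geq_nth ?size_sort //.
  by congr (_ < _)%N; apply/seq.permP; rewrite perm_sort.
by apply: sort_sorted => a b; apply: leq_total.
Qed.

Lemma sort_desc_perm s t : perm_eq s t -> sort_desc s = sort_desc t.
Proof.
apply/(perm_sortP (fun a b => leq_total b a) (rev_trans leq_trans)).
by move=> a b /andP[le_ba le_ab]; apply/eqP; rewrite eqn_leq le_ab le_ba.
Qed.

Lemma count_spec_seq m (T : 'M['F_2]_m) (Q : pred nat) :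
  count Q (spec_seq T) = (\sum_(l < m) Q (spec T l.+1))%N.
Proof.
rewrite /spec_seq count_map -sum1_count big_mkcond /= (iotaDl 1 0) big_map.
rewrite [iota 0 m](_ : _ = index_iota 0 m) ?big_mkord; last by rewrite /index_iota subn0.
by apply: eq_bigr => l _; case: (Q _).
Qed.

Definition row_wts {m n : nat} (A : 'M['F_2]_(m, n)) : seq nat :=
  [seq wt (row i A) | i <- enum 'I_m].

Lemma count_row_wts m n (A : 'M['F_2]_(m, n)) (Q : pred nat) :
  count Q (row_wts A) = (\sum_i Q (wt (row i A)))%N.
Proof.
rewrite count_map -sum1_count big_mkcond /= big_enum_cond /=.
by apply: eq_bigr => i _; case: (Q _).
Qed.

(** * Spectrum of a Kronecker product *)

Section TensorSpectrum.
Variables (m p : nat) (A : 'M['F_2]_m) (B : 'M['F_2]_p).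
Hypotheses (domA : wt_dominant A) (uB : B \in unitmx).

Lemma count_kron_row_wts_spec mu :
  count (leq mu) (kron_seq (row_wts A) (spec_seq B)) =
  (\sum_i \sum_(l < p) (mu <= wt (row i A) * spec B l.+1 : nat))%N.
Proof.
rewrite count_kron_seq big_map big_enum /=.
by apply: eq_bigr => i _; rewrite count_spec_seq.
Qed.

Lemma card_le_count_mindist (R : {set 'I_(m * p)}) :
  (#|R| <= \sum_i \sum_(l < p)
            (mindist (rows_of (A *t B) R) <= wt (row i A) * spec B l.+1 : nat))%N.
Proof.
rewrite card_tens_section; apply: leq_sum => i _.
have [->//|sec_gt0] := posnP #|tens_section R i|.
set d := mindist _.
rewrite (@leq_sum_downclosed (fun l => d <= wt (row i A) * spec B l.+1)%N); last first.
- by rewrite sec_gt0 /= -[leqRHS]card_ord max_card.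
- by move=> l /leq_trans; apply; rewrite leq_mul2l spec_nonincreasing ?orbT.
rewrite prednK //.
have Ai0 : row i A != 0 by rewrite -wt_eq0 -lt0n domA.1.
apply: leq_trans (mindist_tens_le uB Ai0 _) _; first by rewrite -card_gt0.
by rewrite leq_mul2l mindist_le_spec orbT.
Qed.

Lemma spec_tens_ge mu k : (0 < k)%N ->
  (k <= \sum_i \sum_(l < p) (mu <= wt (row i A) * spec B l.+1 : nat))%N ->
  (mu <= spec (A *t B) k)%N.
Proof.
set P := fun i l => (mu <= wt (row i A) * spec B l.+1)%N.
set L := fun i => (\sum_(l < p) P i l)%N => k_gt0 le_k_L.
have le_L_p i : (L i <= p)%N.
  by rewrite -[leqRHS]card_ord -sum1_card leq_sum // => l _; apply: leq_b1.
have /fin_all_exists[S S_spec] i : exists S : {set 'I_p},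
    #|S| = L i /\ mindist (rows_of B S) = spec B (L i).
  by have [S] := spec_attained B (le_L_p i); exists S.
pose R : {set 'I_(m * p)} := [set k | (mxtens_unindex k).2 \in S (mxtens_unindex k).1].
have secR i : tens_section R i = S i by apply/setP => j; rewrite !inE mxtens_indexK.
have le_k_R : (k <= #|R|)%N.
  by rewrite card_tens_section (eq_bigr L) // => i _; rewrite secR (S_spec i).1.
have R_neq0 : R != set0 by rewrite -card_gt0 (leq_trans k_gt0 le_k_R).
have [i] := mindist_tens_ge B domA R_neq0; rewrite secR (S_spec i).2 -card_gt0 (S_spec i).1.
move=> L_gt0 le_mindist; apply: leq_trans (spec_nonincreasing _ le_k_R).
apply: leq_trans (mindist_le_spec _ _) => {le_k_R}; apply: leq_trans le_mindist.
suff: P i (L i).-1 by rewrite /P prednK.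
rewrite -(@leq_sum_downclosed (P i) p) ?L_gt0 ?le_L_p //.
by move=> l /leq_trans; apply; rewrite leq_mul2l spec_nonincreasing ?orbT.
Qed.

Theorem spec_tensmx k : (0 < k <= m * p)%N ->
  spec (A *t B) k = nth 0%N (sort_desc (kron_seq (row_wts A) (spec_seq B))) k.-1.
Proof.
move=> /andP[k_gt0 le_k_mp].
have le_nth mu : (mu <= nth 0 (sort_desc (kron_seq (row_wts A) (spec_seq B))) k.-1)%N =
    (k <= \sum_i \sum_(l < p) (mu <= wt (row i A) * spec B l.+1 : nat))%N.
  rewrite nth_sort_desc prednK // ?count_kron_row_wts_spec //.
  by rewrite size_kron_seq size_map size_enum_ord size_map size_iota.
apply/eqP; rewrite eqn_leq; apply/andP; split.
  by apply/spec_leP => R cardR; rewrite le_nth -cardR card_le_count_mindist.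
by apply: spec_tens_ge; rewrite // -le_nth.
Qed.

End TensorSpectrum.

(** * Kronecker powers of T2 *)

Definition tens_rowblock {R : Type} {m q : nat} (X : 'M[R]_(2 * m, q)) (b : 'I_2) :
  'M[R]_(m, q) := \matrix_(i, j) X (mxtens_index (b, i)) j.

Lemma row_tens_rowblock {R : Type} m q (X : 'M[R]_(2 * m, q)) b i :
  row (mxtens_index (b, i)) X = row i (tens_rowblock X b).
Proof. by apply/rowP => j; rewrite !mxE. Qed.

Lemma ord2P (b : 'I_2) : b = ord0 \/ b = ord_max.
Proof. by case: b => -[|[|//]] ?; [left|right]; apply: val_inj. Qed.

Lemma wt_row_T2 (b : 'I_2) : wt (row b T2) = b.+1.
Proof.
by rewrite wt_mxwt /mxwt big_ord1 big_ord_recl big_ord1; case: (ord2P b) => ->; rewrite !mxE.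
Qed.

Section T2Tensor.
Variables (m n : nat) (A : 'M['F_2]_(m, n)).

Lemma wt_row_T2_tens b i : wt (row (mxtens_index (b, i)) (T2 *t A)) = (b.+1 * wt (row i A))%N.
Proof. by rewrite row_tens wt_tens wt_row_T2. Qed.

Lemma mxwt_T2_tens_mul q (X : 'M['F_2]_(2 * m, q)) :
  mxwt ((T2 *t A)^T *m X) =
  (mxwt (A^T *m (tens_rowblock X ord0 + tens_rowblock X ord_max))
   + mxwt (A^T *m tens_rowblock X ord_max))%N.
Proof.
have mulE c s j : ((T2 *t A)^T *m X) (mxtens_index (c, s)) j =
    \sum_(b < 2) T2 b c * (A^T *m tens_rowblock X b) s j.
  rewrite mxE big_mxtens; apply: eq_bigr => b _; rewrite [(A^T *m _) _ _]mxE big_distrr.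
  by apply: eq_bigr => i _; rewrite [_^T _ _]mxE tensmxE !mxE -mulrA.
have lift00 : lift ord0 ord0 = ord_max :> 'I_2 by apply: val_inj.
rewrite /mxwt big_mxtens big_ord_recl big_ord1 lift00; congr (_ + _)%N.
  apply: eq_bigr => s _; apply: eq_bigr => j _.
  by rewrite mulE big_ord_recl big_ord1 lift00 ![T2 _ _]mxE /= !mul1r mulmxDr [in RHS]mxE.
apply: eq_bigr => s _; apply: eq_bigr => j _.
by rewrite mulE big_ord_recl big_ord1 lift00 ![T2 _ _]mxE /= mul0r mul1r add0r.
Qed.

Lemma wt_dominant_T2_tens : wt_dominant A -> wt_dominant (T2 *t A).
Proof.
move=> [wtA_gt0 domA]; split.
  by move=> k; case: (mxtens_indexP k) => b i; rewrite wt_row_T2_tens muln_gt0 wtA_gt0.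
move=> q X X_neq0; set X0 := tens_rowblock X ord0; set X1 := tens_rowblock X ord_max.
have [X0_eq0|X0_neq0] := eqVneq X0 0.
  have X1_neq0 : X1 != 0.
    apply: contra X_neq0 => /eqP X1_eq0; apply/eqP/matrixP => k j.
    case: (mxtens_indexP k) => b i; rewrite mxE.
    by case: (ord2P b) => ->; [move/matrixP: X0_eq0 | move/matrixP: X1_eq0];
      move=> /(_ i j); rewrite !mxE.
  have [i Xi_neq0 le_wt] := domA _ _ X1_neq0.
  exists (mxtens_index (ord_max, i)); rewrite [row _ X]row_tens_rowblock //.
  rewrite wt_row_T2_tens mxwt_T2_tens_mul -/X0 -/X1 X0_eq0 add0r -mulnA mul2n -addnn.
  exact: leq_add.
have [i Xi_neq0 le_wt] := domA _ _ X0_neq0.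
exists (mxtens_index (ord0, i)); rewrite [row _ X]row_tens_rowblock //.
rewrite wt_row_T2_tens mul1n mxwt_T2_tens_mul -/X0 -/X1; apply: leq_trans le_wt _.
by rewrite -[X0 in A^T *m X0](addrK X1) mulmxBr mxwtB.
Qed.

End T2Tensor.

Lemma wt_row1 (i : 'I_1) : wt (row i (1 : 'M['F_2]_1)) = 1%N.
Proof. by rewrite [i]ord1 wt_mxwt /mxwt !big_ord1 !mxE. Qed.

Lemma wt_dominant1 : wt_dominant (1 : 'M['F_2]_1).
Proof.
split=> [i|q X X_neq0]; first by rewrite wt_row1.
have rowX : row 0 X = X by apply/matrixP => i j; rewrite [i]ord1 mxE.
by exists 0; rewrite ?rowX // wt_row1 mul1n trmx1 mul1mx wt_mxwt.
Qed.

(* [2 ^ n.+1] and [2 * 2 ^ n] are not convertible for a variable [n]. *)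
Lemma T2_ntensS n :
  exists e : (2 * 2 ^ n = 2 ^ n.+1)%N, T2 ^t n.+1 = castmx (e, e) (T2 *t T2 ^t n).
Proof.
exists (esym (expnS 2 n)); case: n => [|n]; rewrite castmx_id //.
by rewrite ntensmx0 ntensmx1 tens_mx_scalar castmx_id scale1r.
Qed.

Lemma T2_ntens_ind (P : nat -> forall m, 'M['F_2]_m -> Prop) :
  P 0%N 1%N 1 -> (forall n m (A : 'M_m), P n m A -> P n.+1 (2 * m)%N (T2 *t A)) ->
  forall n, P n (2 ^ n)%N (T2 ^t n).
Proof.
move=> P0 PS; elim=> [//|n IHn]; have [e ->] := T2_ntensS n.
by case: (2 ^ n.+1)%N / e; rewrite castmx_id; apply: PS.
Qed.

Lemma wt_dominant_T2_ntens n : wt_dominant (T2 ^t n).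
Proof.
elim/T2_ntens_ind: n _ / (T2 ^t n) => [|n m A]; first exact: wt_dominant1.
exact: wt_dominant_T2_tens.
Qed.

Lemma perm_row_wts_T2_ntens n : perm_eq (row_wts (T2 ^t n)) (kron_pow_seq [:: 2; 1]%N n).
Proof.
elim/T2_ntens_ind: n _ / (T2 ^t n) => [|n m A /seq.permP IH]; apply/seq.permP => Q.
  by rewrite count_row_wts big_ord1 wt_row1 /= addn0.
rewrite count_row_wts big_mxtens big_ord_recl big_ord1 /=.
rewrite count_kron_seq !big_cons big_nil addn0 addnC -!IH !count_row_wts.
by congr (_ + _)%N; apply: eq_bigr => i _; rewrite wt_row_T2_tens.
Qed.

Lemma spec_seq_T2_ntens n : spec_seq (T2 ^t n) = sort_desc (kron_pow_seq [:: 2; 1]%N n).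
Proof.
have perm_wts := perm_row_wts_T2_ntens n.
have size_w : size (sort_desc (kron_pow_seq [:: 2; 1]%N n)) = (2 ^ n)%N.
  by rewrite size_sort -(perm_size perm_wts) size_map size_enum_ord.
apply: (@eq_from_nth _ 0%N) => [|k]; rewrite size_map size_iota ?size_w // => lt_k.
rewrite (nth_map 0%N) ?size_iota // nth_iota // add1n.
have := @spec_tensmx _ _ _ (1 : 'M_1) (wt_dominant_T2_ntens n) (unitmx1 _ _) k.+1.
rewrite spec_seq1 kron_seq1 (sort_desc_perm perm_wts) => <-; last by rewrite muln1.
by rewrite tens_mx_scalar scale1r spec_castmx.
Qed.

Theorem proposition1 (n p : nat) (Tp : 'M['F_2]_p) :
  (1 <= p)%N -> binary_kernel Tp ->
  forall k : nat, (1 <= k <= 2 ^ n * p)%N ->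
    spec (T2 ^t n *t Tp) k
      = nth 0%N (sort_desc (kron_seq (spec_seq (T2 ^t n)) (spec_seq Tp))) k.-1
    /\ spec (T2 ^t n *t Tp) k
      = nth 0%N (sort_desc (kron_seq (kron_pow_seq [:: 2%N; 1%N] n) (spec_seq Tp))) k.-1.
Proof.
move=> _ [unit_Tp _] k k_range.
rewrite (spec_tensmx (wt_dominant_T2_ntens n) unit_Tp) //.
have perm_wts := perm_row_wts_T2_ntens n.
split; congr (nth _ _ _); apply/sort_desc_perm/perm_kron_seq => //.
by rewrite spec_seq_T2_ntens perm_sym /sort_desc perm_sort perm_sym.
Qed.
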